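(* Let $\Gamma$ be a Gromov hyperbolic metric space and let $G$ be a group acting on $\Gamma$ by isometries such that the action is of general type. Let $P$ be a positive cone of $G$. Then the $P$-orbits in $\Gamma$ accumulate on every point of $\Lambda(G)$; that is, for every $x_0\in\Gamma$, every point of $\Lambda(G)$ is an accumulation point in $\partial\Gamma$ of the set $\{p x_0 \mid p\in P\}$ (equivalently $\Lambda(G)\subseteq \Lambda(P)$).
   Context: A positive cone of a group $G$ is a subsemigroup $P\subseteq G$ such that $G$ is the disjoint union $P\sqcup P^{-1}\sqcup\{1\}$, where $P^{-1}=\{g^{-1}:g\in P\}$. For a subset $H\subseteq G$ and $x_0\in\Gamma$, $\Lambda(H)\subseteq\partial\Gamma$ denotes the set of accumulation points in the Gromov boundary $\partial\Gamma$ of the orbit $\{hx_0\mid h\in H\}$; it does not depend on $x_0$. The action is called non-elementary if $|\Lambda(G)|\geq 3$, and it is of general type if it is non-elementary and $G$ does not fix any point of $\Lambda(G)$. *)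

From Stdlib Require Import Reals.
Open Scope R_scope.

Definition is_group {G : Type} (mul : G -> G -> G) (one : G) (inv : G -> G) : Prop :=
  (forall a b c, mul a (mul b c) = mul (mul a b) c) /\
  (forall a, mul one a = a) /\ (forall a, mul a one = a) /\
  (forall a, mul (inv a) a = one) /\ (forall a, mul a (inv a) = one).

Definition inv_set {G : Type} (inv : G -> G) (P : G -> Prop) (g : G) : Prop :=
  exists p, P p /\ g = inv p.

Definition positive_cone {G : Type} (mul : G -> G -> G) (one : G) (inv : G -> G)
    (P : G -> Prop) : Prop :=
  (forall a b, P a -> P b -> P (mul a b)) /\
  (forall g, P g \/ inv_set inv P g \/ g = one) /\
  (forall g, ~ (P g /\ inv_set inv P g)) /\
  (forall g, ~ (P g /\ g = one)) /\
  (forall g, ~ (inv_set inv P g /\ g = one)).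

Definition is_metric {X : Type} (d : X -> X -> R) : Prop :=
  (forall x y, 0 <= d x y) /\ (forall x y, d x y = 0 <-> x = y) /\
  (forall x y, d x y = d y x) /\ (forall x y z, d x z <= d x y + d y z).

Definition gprod {X : Type} (d : X -> X -> R) (w x y : X) : R :=
  (d x w + d y w - d x y) / 2.

Definition gromov_hyperbolic {X : Type} (d : X -> X -> R) : Prop :=
  exists delta, 0 <= delta /\
    forall w x y z, Rmin (gprod d w x y) (gprod d w y z) - delta <= gprod d w x z.

(* ---------- Gromov boundary via sequences (valid for non-proper spaces) ---------- *)
Definition conv_inf {X : Type} (d : X -> X -> R) (w : X) (u : nat -> X) : Prop :=
  forall K, exists N, forall i j, (N <= i)%nat -> (N <= j)%nat -> K <= gprod d w (u i) (u j).

(* equivalence of sequences converging to infinity: liminf (u_i|v_j)_w = oo;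
   points of the Gromov boundary are the equivalence classes. *)
Definition equiv_seq {X : Type} (d : X -> X -> R) (w : X) (u v : nat -> X) : Prop :=
  forall K, exists N, forall i j, (N <= i)%nat -> (N <= j)%nat -> K <= gprod d w (u i) (v j).

Definition isometric_action {G X : Type} (mul : G -> G -> G) (one : G)
    (d : X -> X -> R) (act : G -> X -> X) : Prop :=
  (forall x, act one x = x) /\
  (forall g h x, act (mul g h) x = act g (act h x)) /\
  (forall g x y, d (act g x) (act g y) = d x y).

(* The boundary point [u] (u converging to infinity) lies in Λ(H):
   it is the limit in ∂Γ of a sequence of orbit points h_n x0 with h_n ∈ H,
   i.e. (h_n x0) converges to infinity and is equivalent to u. *)
Definition in_limit_set {G X : Type} (d : X -> X -> R) (w : X) (act : G -> X -> X)
    (H : G -> Prop) (x0 : X) (u : nat -> X) : Prop :=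
  exists h : nat -> G, (forall n, H (h n)) /\
    conv_inf d w (fun n => act (h n) x0) /\
    equiv_seq d w (fun n => act (h n) x0) u.

Definition fixes_boundary_point {G X : Type} (d : X -> X -> R) (w : X)
    (act : G -> X -> X) (g : G) (u : nat -> X) : Prop :=
  equiv_seq d w (fun n => act g (u n)) u.

Definition non_elementary {G X : Type} (d : X -> X -> R) (w : X) (act : G -> X -> X)
    (x0 : X) : Prop :=
  exists u1 u2 u3 : nat -> X,
    conv_inf d w u1 /\ conv_inf d w u2 /\ conv_inf d w u3 /\
    in_limit_set d w act (fun _ => True) x0 u1 /\
    in_limit_set d w act (fun _ => True) x0 u2 /\
    in_limit_set d w act (fun _ => True) x0 u3 /\
    ~ equiv_seq d w u1 u2 /\ ~ equiv_seq d w u1 u3 /\ ~ equiv_seq d w u2 u3.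

Definition general_type {G X : Type} (d : X -> X -> R) (w : X) (act : G -> X -> X)
    (x0 : X) : Prop :=
  non_elementary d w act x0 /\
  ~ (exists u : nat -> X, conv_inf d w u /\ in_limit_set d w act (fun _ => True) x0 u /\
       forall g : G, fixes_boundary_point d w act g u).

(* Let [u] be a point of Λ(G), approximated by orbit points h_n x0.  Since G fixes no
   point of Λ(G), some f moves the class of the sequence h_n^-1 x0 (or that sequence does
   not even converge to infinity), so there are arbitrarily large i, j with
   (f h_i^-1 x0 | h_j^-1 x0) bounded.  For such i, j the mutually inverse elements
   g = h_j f h_i^-1 and g^-1 = h_i f^-1 h_j^-1 both move x0 close to [u]: e.g.
   (g x0 | h_j x0) = d(x0, h_j x0) - (h_j^-1 x0 | f h_i^-1 x0) is large, and h_j x0 is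
   close to [u], so the four-point condition applies.  One of g, g^-1 lies in P, and letting the closeness
   grow produces P-orbit points converging to [u]. *)
From Stdlib Require Import Reals Lra Lia Classical ClassicalEpsilon.
Open Scope R_scope.

Definition eventually (Q : nat -> Prop) : Prop :=
  exists N, forall k, (N <= k)%nat -> Q k.

Lemma not_tends_to_infinity (F : nat -> nat -> R) :
  ~ (forall K, exists N, forall i j, (N <= i)%nat -> (N <= j)%nat -> K <= F i j) ->
  exists K, forall N, exists i j, (N <= i)%nat /\ (N <= j)%nat /\ F i j < K.
Proof.
  intros Hnot. apply not_all_ex_not in Hnot as [K HK].
  exists K; intros N.
  apply not_ex_all_not with (n := N) in HK.
  apply not_all_ex_not in HK as [i Hi]. apply not_all_ex_not in Hi as [j Hj].
  exists i, j.
  destruct (classic (N <= i)%nat), (classic (N <= j)%nat);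
    try (exfalso; apply Hj; intros; lia).
  repeat split; auto.
  apply Rnot_le_lt; intros Hle; apply Hj; auto.
Qed.

Section GromovProduct.

Variables (X : Type) (d : X -> X -> R).
Hypothesis Hd : is_metric d.

Lemma gprod_sym w x y : gprod d w x y = gprod d w y x.
Proof. destruct Hd as (_ & _ & Hs & _). unfold gprod. rewrite (Hs x y). lra. Qed.

Lemma gprod_le_dist w x y : gprod d w x y <= d x w.
Proof.
  destruct Hd as (_ & _ & Hs & Ht). unfold gprod.
  pose proof (Ht y x w). rewrite (Hs y x) in *. lra.
Qed.

Lemma gprod_nonneg w x y : 0 <= gprod d w x y.
Proof.
  destruct Hd as (_ & _ & Hs & Ht). unfold gprod.
  pose proof (Ht x w y). rewrite (Hs w y) in *. lra.
Qed.

Lemma gprod_base_le a b x y : gprod d a x y <= gprod d b x y + d a b.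
Proof.
  destruct Hd as (_ & _ & Hs & Ht). unfold gprod.
  pose proof (Ht x b a). pose proof (Ht y b a). rewrite (Hs b a) in *. lra.
Qed.

Lemma equiv_seq_base a b u v : equiv_seq d a u v -> equiv_seq d b u v.
Proof.
  intros Huv K. destruct (Huv (K + d a b)) as [N HN].
  exists N; intros i j Hi Hj.
  pose proof (HN i j Hi Hj). pose proof (gprod_base_le a b (u i) (v j)). lra.
Qed.

Section Hyperbolic.

Variable delta : R.
Hypothesis Hdelta : forall w x y z,
  Rmin (gprod d w x y) (gprod d w y z) - delta <= gprod d w x z.

Lemma gprod_hyp_ge w x y z L :
  L <= gprod d w x y -> L <= gprod d w y z -> L - delta <= gprod d w x z.
Proof.
  intros Hxy Hyz. pose proof (Rmin_glb _ _ _ Hxy Hyz). pose proof (Hdelta w x y z). lra.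
Qed.

Lemma limit_of_approximants w (u v : nat -> X) :
  conv_inf d w u ->
  (forall n, eventually (fun k => INR n <= gprod d w (v n) (u k))) ->
  conv_inf d w v /\ equiv_seq d w v u.
Proof.
  intros Hu Hv. split.
  - intros K. destruct (INR_unbounded (K + delta)) as [N HN].
    exists N; intros i j Hi Hj.
    destruct (Hv i) as [Ni HNi], (Hv j) as [Nj HNj].
    set (k := max Ni Nj).
    assert (Hik : INR N <= gprod d w (v i) (u k))
      by (pose proof (le_INR _ _ Hi); pose proof (HNi k (Nat.le_max_l _ _)); lra).
    assert (Hkj : INR N <= gprod d w (u k) (v j)).
    { rewrite gprod_sym.
      pose proof (le_INR _ _ Hj); pose proof (HNj k (Nat.le_max_r _ _)); lra. }
    pose proof (gprod_hyp_ge _ _ _ _ _ Hik Hkj). lra.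
  - intros K. destruct (Hu (K + delta)) as [Nu HNu].
    destruct (INR_unbounded (K + delta)) as [N HN].
    exists (max N Nu); intros i j Hi Hj.
    destruct (Hv i) as [Ni HNi].
    set (k := max Ni Nu).
    assert (Hik : K + delta <= gprod d w (v i) (u k)).
    { assert (HNi' : (N <= i)%nat) by lia.
      pose proof (le_INR _ _ HNi'); pose proof (HNi k (Nat.le_max_l _ _)); lra. }
    assert (Hkj : K + delta <= gprod d w (u k) (u j)) by (apply HNu; lia).
    pose proof (gprod_hyp_ge _ _ _ _ _ Hik Hkj). lra.
Qed.

Lemma in_limit_set_of_approximants {G : Type} (act : G -> X -> X) (H : G -> Prop)
    w x0 (u : nat -> X) :
  conv_inf d w u ->
  (forall n, exists h, H h /\ eventually (fun k => INR n <= gprod d w (act h x0) (u k))) ->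
  in_limit_set d w act H x0 u.
Proof.
  intros Hu Happrox.
  destruct (choice _ Happrox) as [h Hh].
  exists h; split; [intros n; apply Hh|].
  apply limit_of_approximants; [exact Hu|intros n; apply Hh].
Qed.

End Hyperbolic.

End GromovProduct.

Section Cone.

Variables (G : Type) (mul : G -> G -> G) (one : G) (inv : G -> G).
Hypothesis Hg : is_group mul one inv.

Lemma mul_conj_inv a b c :
  mul (mul a (mul b (inv c))) (mul c (mul (inv b) (inv a))) = one.
Proof.
  destruct Hg as (Has & Hl & _ & Hil & Hir).
  assert (Hcancel : forall x y z, mul x y = one -> mul x (mul y z) = z)
    by (intros x y z Hxy; rewrite Has, Hxy, Hl; reflexivity).
  rewrite <- !Has, (Hcancel (inv c) c) by apply Hil.
  rewrite (Hcancel b (inv b)) by apply Hir. apply Hir.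
Qed.

Lemma cone_dichotomy P : positive_cone mul one inv P ->
  forall g g', mul g g' = one -> g <> one -> P g \/ P g'.
Proof.
  intros (_ & Htri & _) g g' Hgg' Hg1.
  destruct (Htri g) as [Pg | [[p [Pp ->]] | Eg]]; [now left| |contradiction].
  right. destruct Hg as (Has & Hl & Hr & _ & Hir).
  replace g' with p; [exact Pp|].
  rewrite <- (Hr p), <- Hgg', Has, Hir, Hl. reflexivity.
Qed.

End Cone.

Section Action.

Variables (X G : Type) (d : X -> X -> R).
Variables (mul : G -> G -> G) (one : G) (inv : G -> G) (act : G -> X -> X).
Hypothesis Hd : is_metric d.
Hypothesis Hg : is_group mul one inv.
Hypothesis Ha : isometric_action mul one d act.

Lemma act_inv_r f y : act f (act (inv f) y) = y.
Proof.
  destruct Hg as (_ & _ & _ & _ & Hir), Ha as (H1 & Hm & _).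
  rewrite <- Hm, Hir, H1. reflexivity.
Qed.

Lemma act_inv_l f y : act (inv f) (act f y) = y.
Proof.
  destruct Hg as (_ & _ & _ & Hil & _), Ha as (H1 & Hm & _).
  rewrite <- Hm, Hil, H1. reflexivity.
Qed.

Lemma gprod_act f o x y : gprod d (act f o) (act f x) (act f y) = gprod d o x y.
Proof. destruct Ha as (_ & _ & Hi). unfold gprod. rewrite !Hi. reflexivity. Qed.

Lemma gprod_act_inv_le o f x y :
  gprod d o x (act (inv f) y) <= gprod d o (act f x) y + d (act f o) o.
Proof.
  rewrite <- (gprod_act f), act_inv_r. apply gprod_base_le, Hd.
Qed.

Lemma gprod_mul_orbit o a b :
  gprod d o (act (mul a b) o) (act a o) + gprod d o (act (inv a) o) (act b o)
  = d o (act a o).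
Proof.
  destruct Hd as (_ & _ & Hs & _), Ha as (_ & Hm & Hi).
  rewrite <- (gprod_act (inv a)), Hm, !act_inv_l.
  assert (Ea : d (act (inv a) o) o = d o (act a o))
    by (rewrite <- (Hi a), act_inv_r; reflexivity).
  unfold gprod. rewrite (Hs o (act (inv a) o)), Ea, (Hs (act b o) (act (inv a) o)). lra.
Qed.

Lemma exists_non_fixing_translate o : general_type d o act o ->
  forall s : nat -> G, exists f K, forall N, exists i j, (N <= i)%nat /\ (N <= j)%nat /\
    gprod d o (act f (act (s i) o)) (act (s j) o) < K.
Proof.
  intros [_ Hnofix] s. set (z := fun n => act (s n) o).
  destruct (classic (conv_inf d o z)) as [Hz|Hz].
  - assert (Hmoved : ~ forall f, fixes_boundary_point d o act f z).
    { intros Hall. apply Hnofix. exists z. repeat split; auto.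
      exists s. repeat split; auto. }
    apply not_all_ex_not in Hmoved as [f Hf].
    exists f. exact (not_tends_to_infinity _ Hf).
  - exists one. destruct (not_tends_to_infinity _ Hz) as [K HK].
    exists K. destruct Ha as (H1 & _). intros N.
    destruct (HK N) as (i & j & Hi & Hj & Hij). exists i, j. rewrite H1. auto.
Qed.

Section Hyperbolic.

Variable delta : R.
Hypothesis Hdelta : forall w x y z,
  Rmin (gprod d w x y) (gprod d w y z) - delta <= gprod d w x z.

Lemma gprod_mul_orbit_ge o a b y M B :
  gprod d o (act (inv a) o) (act b o) <= B -> M <= gprod d o (act a o) y ->
  M - B - delta <= gprod d o (act (mul a b) o) y.
Proof.
  intros HB HM.
  pose proof (gprod_mul_orbit o a b).
  pose proof (gprod_le_dist X d Hd o (act a o) y).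
  pose proof (gprod_nonneg X d Hd o (act (inv a) o) (act b o)).
  destruct Hd as (_ & _ & Hs & _). rewrite (Hs o) in *.
  apply (gprod_hyp_ge X d delta Hdelta _ _ (act a o)); lra.
Qed.

Lemma cone_orbit_approximation P o (u : nat -> X) (h : nat -> G) :
  positive_cone mul one inv P -> general_type d o act o ->
  equiv_seq d o (fun n => act (h n) o) u ->
  forall L, 0 < L -> exists p, P p /\ eventually (fun k => L <= gprod d o (act p o) (u k)).
Proof.
  intros Hcone Hgen Hhu L HL.
  destruct (exists_non_fixing_translate o Hgen (fun n => inv (h n))) as (f & K & Hf).
  set (B := K + d (act f o) o).
  destruct (Hhu (L + B + delta)) as [N HN].
  destruct (Hf N) as (i & j & Hi & Hj & Hfij).
  destruct Ha as (H1 & Hm & _).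
  set (g := mul (h j) (mul f (inv (h i)))).
  set (g' := mul (h i) (mul (inv f) (inv (h j)))).
  assert (Hclose_g : eventually (fun k => L <= gprod d o (act g o) (u k))).
  { assert (Hbound : gprod d o (act (inv (h j)) o) (act (mul f (inv (h i))) o) <= B).
    { rewrite Hm, (gprod_sym X d Hd). pose proof (proj1 Hd (act f o) o). unfold B; lra. }
    exists N; intros k Hk.
    pose proof (gprod_mul_orbit_ge o _ _ (u k) _ B Hbound (HN j k Hj Hk)).
    unfold g; lra. }
  assert (Hclose_g' : eventually (fun k => L <= gprod d o (act g' o) (u k))).
  { assert (Hbound : gprod d o (act (inv (h i)) o) (act (mul (inv f) (inv (h j))) o) <= B).
    { rewrite Hm. pose proof (gprod_act_inv_le o f (act (inv (h i)) o) (act (inv (h j)) o)).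
      unfold B; lra. }
    exists N; intros k Hk.
    pose proof (gprod_mul_orbit_ge o _ _ (u k) _ B Hbound (HN i k Hi Hk)).
    unfold g'; lra. }
  assert (Hg1 : g <> one).
  { intros Eg. destruct Hclose_g as [N' HN'].
    pose proof (HN' N' (le_n _)) as Hfar. rewrite Eg, H1 in Hfar.
    pose proof (gprod_le_dist X d Hd o o (u N')).
    pose proof (proj2 (proj1 (proj2 Hd) o o) eq_refl). lra. }
  destruct (cone_dichotomy G mul one inv Hg P Hcone g g'
              (mul_conj_inv G mul one inv Hg _ _ _) Hg1) as [Pg | Pg']; [exists g | exists g']; auto.
Qed.

End Hyperbolic.

End Action.

Theorem theorem1p1 (X G : Type) (d : X -> X -> R)
    (mul : G -> G -> G) (one : G) (inv : G -> G) (act : G -> X -> X)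
    (P : G -> Prop) :
  is_metric d -> gromov_hyperbolic d ->
  is_group mul one inv -> isometric_action mul one d act ->
  (forall w x1 : X, general_type d w act x1) ->
  positive_cone mul one inv P ->
  forall (w x0 : X) (u : nat -> X),
    conv_inf d w u ->
    in_limit_set d w act (fun _ => True) x0 u ->
    in_limit_set d w act P x0 u.
Proof.
  intros Hd (delta & _ & Hdelta) Hg Ha Hgen Hcone w x0 u Hu (h & _ & _ & Hhu).
  (* The approximation is built at base point x0 and then moved to w. *)
  apply (in_limit_set_of_approximants X d Hd delta Hdelta); [exact Hu|].
  intros n.
  assert (HL : 0 < INR n + d x0 w + 1)
    by (pose proof (pos_INR n); pose proof (proj1 Hd x0 w); lra).
  destruct (cone_orbit_approximation X G d mul one inv act Hd Hg Ha delta Hdelta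
              P x0 u h Hcone (Hgen x0 x0) (equiv_seq_base X d Hd w x0 _ _ Hhu) _ HL)
    as (p & Pp & N & HN).
  exists p; split; [exact Pp|exists N; intros k Hk].
  pose proof (HN k Hk). pose proof (gprod_base_le X d Hd x0 w (act p x0) (u k)). lra.
Qed.
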